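(* If the rows of ${\bf q}$ are pairwise distinct, then $\mathrm{Aut}_{\rm gr}(\mathcal{O}_{\bf q}(k^{n}))\cong(k^* )^n\rtimes\mathcal P_{\bf q}$.
   Context: Let $k$ be a field, $k^*=k\setminus\{0\}$, $n\ge1$, and ${\bf q}=(q_{ij})\in\mathcal M_n(k)$ with $q_{ij}q_{ji}=1$, $q_{ii}=1$ for all $i,j$. The quantum affine space is $\mathcal{O}_{\bf q}(k^{n})=k\langle x_1,\dots,x_n\rangle/\langle x_jx_i-q_{ij}x_ix_j,\ 1\le i,j\le n\rangle$, $\mathbb N$-graded with $\deg x_i=1$; $\mathrm{Aut}_{\rm gr}$ denotes its group of graded algebra automorphisms. $\mathcal P_{\bf q}=\{\pi\in S_n: q_{\pi(i)\pi(j)}=q_{ij}\ \forall\,1\le i,j\le n\}$, acting on $(k^* )^n$ (the diagonal automorphisms $x_i\mapsto\lambda_ix_i$) by permuting coordinates. *)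

From HB Require Import structures.
From mathcomp Require Import all_boot all_order all_algebra all_fingroup.
Set Implicit Arguments. Unset Strict Implicit. Unset Printing Implicit Defensive.
Import GRing.Theory.
Local Open Scope ring_scope.

Section QuantumAffine.
Variables (k : fieldType) (n : nat).

Definition q_rel (q : 'M[k]_n) (B : algType k) (y : 'I_n -> B) : Prop :=
  forall i j : 'I_n, y j * y i = q i j *: (y i * y j).

Definition alg_hom (A B : algType k) (f : A -> B) : Prop :=
  [/\ forall (a : k) (u v : A), f (a *: u + v) = a *: f u + f v,
      forall u v : A, f (u * v) = f u * f v
    & f 1 = 1].

(* (A, x) is the algebra k<x_1..x_n>/<x_j x_i - q_ij x_i x_j>, given by its
   universal property as a presented algebra. *)
Definition is_quantum_affine_space (q : 'M[k]_n) (A : algType k)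
    (x : 'I_n -> A) : Prop :=
  q_rel q x /\
  forall (B : algType k) (y : 'I_n -> B), q_rel q y ->
    exists g : A -> B,
      [/\ alg_hom g, forall i, g (x i) = y i
        & forall h : A -> B, alg_hom h -> (forall i, h (x i) = y i) -> h =1 g].

Definition homog (A : algType k) (x : 'I_n -> A) (d : nat) (u : A) : Prop :=
  exists (m : nat) (c : 'I_m -> k) (s : 'I_m -> seq 'I_n),
    (forall j, size (s j) = d) /\
    u = \sum_(j < m) c j *: \prod_(i <- s j) x i.

Definition graded_aut (A : algType k) (x : 'I_n -> A) (f : A -> A) : Prop :=
  [/\ alg_hom f, bijective f & forall d u, homog x d u -> homog x d (f u)].

Definition Pq (q : 'M[k]_n) : {set {perm 'I_n}} :=
  [set p : {perm 'I_n} | [forall i, forall j, q (p i) (p j) == q i j]].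

(* left action of S_n on (k^* )^n by permuting coordinates:
   (pi . mu)_i = mu_{pi^{-1}(i)} *)
Definition perm_act (p : {perm 'I_n}) (mu : 'I_n -> k) : 'I_n -> k :=
  fun i => mu ((p^-1)%g i).

End QuantumAffine.

(* A graded automorphism f sends x_i to a combination sum_a C_ia x_a with C
   invertible.  No basis of O_q(k^n) is available, so the coefficients of
   f(x_j) f(x_i) = q_ij f(x_i) f(x_j) are read off through representations of
   the presented algebra: the characters x_e |-> delta_ea into k, and, for
   a <> b, a representation in 4x4 matrices sending x_a, x_b to the generators
   of a quantum exterior algebra.  The resulting quadratic identities, the
   invertibility of C and the distinctness of the rows of q force each row of C
   to have exactly one nonzero entry, in a column given by a permutation lying
   in P_q, so f is x_i |-> lam_(p i) x_(p i).  Conversely these maps exist by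
   the universal property and compose as in the semidirect product. *)

From mathcomp Require Import all_boot all_order all_algebra all_fingroup.
From mathcomp Require Import ring.
From Stdlib Require Import ClassicalEpsilon.
Set Implicit Arguments.
Unset Strict Implicit.
Unset Printing Implicit Defensive.

Import GRing.Theory.
Local Open Scope ring_scope.

Section AlgHom.
Variables (k : fieldType) (A B : algType k) (f : A -> B).
Hypothesis hom_f : alg_hom f.

Lemma alg_homD u v : f (u + v) = f u + f v.
Proof. by case: hom_f => lin _ _; have := lin 1 u v; rewrite !scale1r. Qed.

Lemma alg_hom0 : f 0 = 0.
Proof. by apply: (addrI (f 0)); rewrite -alg_homD !addr0. Qed.

Lemma alg_homZ a u : f (a *: u) = a *: f u.
Proof. by case: hom_f => lin _ _; have := lin a u 0; rewrite !addr0 alg_hom0 addr0. Qed.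

Lemma alg_homM u v : f (u * v) = f u * f v.
Proof. by case: hom_f. Qed.

Lemma alg_hom1 : f 1 = 1.
Proof. by case: hom_f. Qed.

Lemma alg_hom_sum (I : Type) (r : seq I) (P : pred I) (F : I -> A) :
  f (\sum_(i <- r | P i) F i) = \sum_(i <- r | P i) f (F i).
Proof. exact: (big_morph f alg_homD alg_hom0). Qed.

Lemma alg_hom_prod (I : Type) (r : seq I) (F : I -> A) :
  f (\prod_(i <- r) F i) = \prod_(i <- r) f (F i).
Proof. exact: (big_morph f alg_homM alg_hom1). Qed.

Lemma alg_hom_lincomb (I : finType) (c : I -> k) (y : I -> A) :
  f (\sum_i c i *: y i) = \sum_i c i *: f (y i).
Proof. by rewrite alg_hom_sum; apply: eq_bigr => i _; rewrite alg_homZ. Qed.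

End AlgHom.

Lemma alg_hom_id (k : fieldType) (A : algType k) : alg_hom (@id A).
Proof. by []. Qed.

Lemma alg_hom_comp (k : fieldType) (A B C : algType k) (f : A -> B) (g : B -> C) :
  alg_hom f -> alg_hom g -> alg_hom (g \o f).
Proof.
move=> hom_f hom_g; split=> [a u v|u v|] /=.
- by rewrite (alg_homD hom_f) (alg_homZ hom_f) (alg_homD hom_g) (alg_homZ hom_g).
- by rewrite (alg_homM hom_f) (alg_homM hom_g).
- by rewrite (alg_hom1 hom_f) (alg_hom1 hom_g).
Qed.

Lemma scalerMM (k : fieldType) (A : algType k) (a b : k) (u v : A) :
  (a *: u) * (b *: v) = (a * b) *: (u * v).
Proof. by rewrite -scalerAl -scalerAr scalerA. Qed.

Lemma scaler_prod (k : fieldType) (A : algType k) (I : Type) (r : seq I)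
    (a : I -> k) (y : I -> A) :
  \prod_(i <- r) (a i *: y i) = (\prod_(i <- r) a i) *: \prod_(i <- r) y i.
Proof.
elim: r => [|i r IHr]; first by rewrite !big_nil scale1r.
by rewrite !big_cons IHr scalerMM.
Qed.

Section SumIf.
Variables (R : pzRingType) (V : lmodType R) (I : finType) (c : I -> R).

Lemma sum_scale_if1 (a : I) (u : V) :
  \sum_i c i *: (if i == a then u else 0) = c a *: u.
Proof. by rewrite (bigD1 a) //= eqxx big1 ?addr0 // => i /negbTE ->; rewrite scaler0. Qed.

Lemma sum_scale_if2 (a b : I) (u v : V) : a != b ->
  \sum_i c i *: (if i == a then u else if i == b then v else 0) = c a *: u + c b *: v.
Proof.
move=> neq_ab; rewrite (bigD1 a) //= eqxx (bigD1 b) 1?eq_sym //= (negbTE neq_ab) eqxx.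
by rewrite big1 ?addr0 // => i /andP[/negbTE -> /negbTE ->]; rewrite scaler0.
Qed.

End SumIf.

Section PermGroup.
Variables (k : fieldType) (n : nat) (q : 'M[k]_n).

Lemma PqP (p : {perm 'I_n}) :
  reflect (forall i j, q (p i) (p j) = q i j) (p \in Pq q).
Proof.
rewrite inE; apply: (iffP forallP) => [qp i j|qp i].
  by move: (qp i) => /forallP/(_ j)/eqP.
by apply/forallP => j; rewrite qp.
Qed.

Lemma group_set_Pq : group_set (Pq q).
Proof.
apply/group_setP; split=> [|p r /PqP qp /PqP qr]; first by apply/PqP => i j; rewrite !perm1.
by apply/PqP => i j; rewrite !permM qr qp.
Qed.

Canonical Pq_group := group group_set_Pq.

End PermGroup.

Section QuantumExterior.
Variable k : fieldType.

Definition munit (i j : nat) : 'M[k]_4 := delta_mx (inord i) (inord j).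

Lemma munitM (i j j' l : nat) : (j < 4)%N -> (j' < 4)%N ->
  munit i j * munit j' l = if j == j' then munit i l else 0.
Proof.
move=> lt_j lt_j'; rewrite -mulmxE mul_delta_mx_cond.
case: (j =P j') => [<-|neq]; first by rewrite eqxx.
suff /negbTE -> : inord j != inord j' :> 'I_4 by rewrite mulr0n.
by apply/eqP => /(congr1 val); rewrite /= !inordK.
Qed.

(* In 'M_4, u and v s generate a quantum exterior algebra (u^2 = v^2 = 0,
   v u = s u v, u v <> 0); its entry (3, 0) detects the coefficient of x_a x_b. *)
Definition qext_u : 'M[k]_4 := munit 1 0 + munit 3 2.
Definition qext_v (s : k) : 'M[k]_4 := munit 2 0 + s *: munit 3 1.

Lemma qext_uu : qext_u * qext_u = 0.
Proof. by rewrite mulrDl !mulrDr !munitM //= !addr0. Qed.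

Lemma qext_vv s : qext_v s * qext_v s = 0.
Proof. by rewrite mulrDl !mulrDr -!scalerAl -!scalerAr !munitM //= !scaler0 !addr0. Qed.

Lemma qext_uv s : qext_u * qext_v s = munit 3 0.
Proof. by rewrite mulrDl !mulrDr -!scalerAr !munitM //= !scaler0 !addr0 add0r. Qed.

Lemma qext_vu s : qext_v s * qext_u = s *: munit 3 0.
Proof. by rewrite mulrDl !mulrDr -!scalerAl !munitM //= !scaler0 !addr0 !add0r. Qed.

Lemma qext_mul_coef s (a b c d : k) :
  ((a *: qext_u + b *: qext_v s) * (c *: qext_u + d *: qext_v s)) (inord 3) (inord 0)
    = a * d + s * (b * c).
Proof.
rewrite mulrDl !mulrDr !scalerMM qext_uu qext_vv qext_uv qext_vu !scaler0 !addr0 add0r.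
by rewrite !mxE !eqxx /= !mulr1 [s * _]mulrC.
Qed.

End QuantumExterior.

Arguments qext_u {k}.

Section UnitMatrix.
Variables (F : fieldType) (m : nat) (M : 'M[F]_m).
Hypothesis M_unit : M \in unitmx.

Lemma unitmx_mul_neq0 (v : 'cV_m) : v != 0 -> exists j, (M *m v) j 0 != 0.
Proof.
move=> v_neq0; case: (pickP (fun j => (M *m v) j 0 != 0)) => [j|Mv0]; first by exists j.
case/eqP: v_neq0; rewrite -(mulKmx M_unit v).
suff -> : M *m v = 0 by rewrite mulmx0.
by apply/matrixP => j l; rewrite ord1 [RHS]mxE; apply/eqP/negbFE; exact: Mv0.
Qed.

Lemma unitmx_col_neq0 c : exists j, M j c != 0.
Proof.
have [|j] := @unitmx_mul_neq0 (delta_mx c 0).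
  by apply/eqP => /matrixP/(_ c 0); rewrite !mxE !eqxx => /eqP; rewrite oner_eq0.
by rewrite -colE mxE; exists j.
Qed.

Lemma unitmx_col_comb a b (u w : F) : a != b -> u != 0 ->
  exists j, u * M j a - w * M j b != 0.
Proof.
move=> neq_ab u_neq0.
have [|j] := @unitmx_mul_neq0 (u *: delta_mx a 0 - w *: delta_mx b 0).
  apply: contra u_neq0 => /eqP/matrixP/(_ a 0).
  by rewrite !mxE !eqxx (negbTE neq_ab) mulr1 mulr0 subr0 => ->.
by rewrite mulmxBr -!scalemxAr -!colE !mxE; exists j.
Qed.

End UnitMatrix.

Lemma unitmx_row_neq0 (F : fieldType) (m : nat) (M : 'M[F]_m) i :
  M \in unitmx -> exists a, M i a != 0.
Proof.
rewrite -unitmx_tr => /unitmx_col_neq0/(_ i)[a].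
by rewrite mxE; exists a.
Qed.

Lemma unitmx_row_comb (F : fieldType) (m : nat) (M : 'M[F]_m) i j (u w : F) :
  M \in unitmx -> i != j -> u != 0 -> exists a, u * M i a - w * M j a != 0.
Proof.
rewrite -unitmx_tr => Mt_unit neq_ij u_neq0.
have [a] := unitmx_col_comb Mt_unit w neq_ij u_neq0.
by rewrite !mxE; exists a.
Qed.

Section MonomialCoefficients.
Variables (k : fieldType) (n : nat) (q C : 'M[k]_n).
Hypotheses (q_diag : forall i, q i i = 1) (q_rows_inj : injective (fun i => row i q)).
Hypothesis C_unit : C \in unitmx.
(* The coefficients of x_a^2 and x_a x_b in f(x_j) f(x_i) = q_ij f(x_i) f(x_j)
   when f(x_i) = sum_a C_ia x_a. *)
Hypothesis C_rel_same : forall i j a, C j a * C i a = q i j * (C i a * C j a).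
Hypothesis C_rel_pair : forall i j a b, a != b ->
  C j a * C i b + q a b * (C j b * C i a)
    = q i j * (C i a * C j b + q a b * (C i b * C j a)).

Lemma q_supp_pair i j a b : a != b -> C i b = 0 -> C i a != 0 -> C j b != 0 ->
  q a b = q i j.
Proof.
move=> neq_ab Cib0 Cia Cjb; have := C_rel_pair i j neq_ab.
rewrite Cib0 !(mulr0, mul0r, add0r, addr0) [C i a * _]mulrC => E.
exact: (mulIf (mulf_neq0 Cjb Cia)) E.
Qed.

Lemma q_supp_const i c : C i c = 0 ->
  exists j, forall a, C i a != 0 -> q a c = q i j.
Proof.
move=> Cic0; have [j Cjc] := unitmx_col_neq0 C_unit c; exists j => a Cia.
have neq_ac : a != c by apply: contraNneq Cia => ->; rewrite Cic0.
exact: q_supp_pair neq_ac Cic0 Cia Cjc.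
Qed.

Lemma q_supp_eq1 i a b : a != b -> C i a != 0 -> C i b != 0 -> q a b = 1.
Proof.
move=> neq_ab Cia Cib.
have [j Dj] := unitmx_col_comb C_unit (C i a) neq_ab Cib.
have qij : q i j = 1.
  apply/eqP; apply: contraNT Dj => qij_neq1.
  have Cj0 c : C i c != 0 -> C j c = 0.
    move=> Cic; have : (1 - q i j) * (C i c * C j c) = 0.
      by rewrite mulrBl mul1r -C_rel_same [C j c * _]mulrC subrr.
    by move/eqP; rewrite !mulf_eq0 subr_eq0 eq_sym (negbTE qij_neq1) (negbTE Cic) => /eqP.
  by rewrite !Cj0 // !mulr0 subrr.
have := C_rel_pair i j neq_ab; rewrite qij mul1r => E.
have : (C i b * C j a - C i a * C j b) * (1 - q a b) = 0.
  transitivity ((C j a * C i b + q a b * (C j b * C i a))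
                - (C i a * C j b + q a b * (C i b * C j a))); first by ring.
  by rewrite E subrr.
by move/eqP; rewrite mulf_eq0 (negbTE Dj) subr_eq0 eq_sym => /eqP.
Qed.

(* Two support points of a row of C index equal rows of q. *)
Lemma supp_uniq i a a' : C i a != 0 -> C i a' != 0 -> a = a'.
Proof.
move=> Cia Cia'; apply: q_rows_inj; apply/rowP => c; rewrite !mxE.
have [Cic0|Cic] := eqVneq (C i c) 0.
  by have [j qj] := q_supp_const Cic0; rewrite !qj.
have q1 b : C i b != 0 -> q b c = 1.
  move=> Cib; have [->|neq_bc] := eqVneq b c; first exact: q_diag.
  exact: q_supp_eq1 neq_bc Cib Cic.
by rewrite !q1.
Qed.

Definition pivot i := odflt i [pick a | C i a != 0].

Lemma pivot_neq0 i : C i (pivot i) != 0.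
Proof.
rewrite /pivot; case: pickP => [a //|C0].
by have [a] := unitmx_row_neq0 i C_unit; rewrite C0.
Qed.

Lemma pivot_eq0 i a : a != pivot i -> C i a = 0.
Proof.
apply: contraNeq => Cia; apply/eqP; exact: supp_uniq Cia (pivot_neq0 i).
Qed.

Lemma pivot_inj : injective pivot.
Proof.
move=> i j eq_ij; apply/eqP/negPn/negP => neq_ij.
have [a /eqP[]] := unitmx_row_comb (C i (pivot i)) C_unit neq_ij (pivot_neq0 j).
have [->|neq_a] := eqVneq a (pivot i).
  by rewrite -!eq_ij mulrC subrr.
have neq_a' : a != pivot j by rewrite -eq_ij.
by rewrite (pivot_eq0 neq_a) (pivot_eq0 neq_a') !mulr0 subrr.
Qed.

Lemma q_pivot i j : q (pivot i) (pivot j) = q i j.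
Proof.
have [->|neq_ij] := eqVneq i j; first by rewrite !q_diag.
have neq_piv : pivot i != pivot j by apply: contra neq_ij => /eqP/pivot_inj ->.
have Cij0 : C i (pivot j) = 0 by apply: pivot_eq0; rewrite eq_sym.
exact: q_supp_pair neq_piv Cij0 (pivot_neq0 i) (pivot_neq0 j).
Qed.

Lemma monomial_perm : exists p : {perm 'I_n},
  [/\ p \in Pq q, forall i, C i (p i) != 0 & forall i a, a != p i -> C i a = 0].
Proof.
exists (perm pivot_inj); split=> [|i|i a]; rewrite ?permE.
- by apply/PqP => i j; rewrite !permE q_pivot.
- exact: pivot_neq0.
- exact: pivot_eq0.
Qed.

End MonomialCoefficients.

Lemma q_rel_comp (k : fieldType) (n : nat) (q : 'M[k]_n) (B C : algType k)
    (y : 'I_n -> B) (h : B -> C) :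
  q_rel q y -> alg_hom h -> q_rel q (h \o y).
Proof.
by move=> rel_y hom_h i j /=; rewrite -!(alg_homM hom_h) rel_y (alg_homZ hom_h).
Qed.

Lemma homog_gen (k : fieldType) (n : nat) (A : algType k) (x : 'I_n -> A) i :
  homog x 1 (x i).
Proof.
exists 1%N, (fun _ => 1), (fun _ => [:: i]); split=> //.
by rewrite big_ord1 big_seq1 scale1r.
Qed.

Section QuantumAffineSpace.
Variables (k : fieldType) (n : nat) (q : 'M[k]_n) (A : algType k) (x : 'I_n -> A).
Hypothesis qA : is_quantum_affine_space q x.
Hypotheses (q_diag : forall i, q i i = 1) (q_inv : forall i j, q i j * q j i = 1).

Lemma alg_hom_gen_ext (B : algType k) (g h : A -> B) :
  alg_hom g -> alg_hom h -> (forall i, g (x i) = h (x i)) -> g =1 h.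
Proof.
case: qA => rel_x univ hom_g hom_h gh.
have [l [_ _ l_uniq]] := univ B _ (q_rel_comp rel_x hom_g).
have g_l := l_uniq g hom_g (fun i => erefl).
have h_l := l_uniq h hom_h (fun i => esym (gh i)).
by move=> u; rewrite g_l h_l.
Qed.

Definition qlift (B : algType k) (y : 'I_n -> B) : A -> B :=
  epsilon (inhabits (fun _ => 0)) (fun g => alg_hom g /\ forall i, g (x i) = y i).

Lemma qliftP (B : algType k) (y : 'I_n -> B) : q_rel q y ->
  alg_hom (qlift y) /\ forall i, qlift y (x i) = y i.
Proof.
move=> rel_y.
have [g [hom_g gen_g _]] := qA.2 B y rel_y.
pose P g := alg_hom g /\ forall i, g (x i) = y i.
exact: (epsilon_spec _ P (ex_intro P g (conj hom_g gen_g))).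
Qed.

Definition xcoord (c : 'I_n) : A -> k^o := qlift (fun e => if e == c then 1 else 0).

Lemma xcoordP c :
  alg_hom (xcoord c) /\ forall e, xcoord c (x e) = if e == c then 1 else 0.
Proof.
apply: qliftP => i j.
by case: eqP => [->|_]; case: eqP => [->|_]; rewrite ?mul0r ?mulr0 ?scaler0 ?q_diag ?scale1r.
Qed.

Lemma xcoord_lincomb c (w : 'I_n -> k) : xcoord c (\sum_e w e *: x e) = w c.
Proof.
have [hom gen] := xcoordP c; rewrite (alg_hom_lincomb hom).
under eq_bigr do rewrite gen.
by rewrite sum_scale_if1; exact: mulr1.
Qed.

Lemma gens_free (w : 'I_n -> k) : \sum_e w e *: x e = 0 -> forall e, w e = 0.
Proof. by move=> w0 e; rewrite -(xcoord_lincomb e) w0 (alg_hom0 (xcoordP e).1). Qed.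

Lemma homog1_lincomb u : homog x 1 u -> u = \sum_a xcoord a u *: x a.
Proof.
move=> [m [c [s [size_s ->]]]].
suff [r ->] : exists r : 'I_n -> k,
    \sum_j c j *: \prod_(i <- s j) x i = \sum_a r a *: x a.
  by under [RHS]eq_bigr do rewrite xcoord_lincomb.
exists (fun a => \sum_j (if s j == [:: a] then c j else 0)).
under [RHS]eq_bigr do rewrite scaler_suml.
rewrite exchange_big /=; apply: eq_bigr => j _.
have := size_s j; case: (s j) => [|h [|? ?]] //= _.
rewrite big_seq1 (bigD1 h) //= eqxx big1 ?addr0 // => a neq_ah.
by rewrite eqseq_cons andbT eq_sym (negbTE neq_ah) scale0r.
Qed.

Definition qpair (a b : 'I_n) : A -> 'M[k]_4 :=
  qlift (fun e => if e == a then qext_u else if e == b then qext_v (q a b) else 0).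

Lemma qpairP a b : a != b ->
  alg_hom (qpair a b) /\ forall e, qpair a b (x e)
    = if e == a then qext_u else if e == b then qext_v (q a b) else 0.
Proof.
move=> neq_ab; apply: qliftP.
set y := fun e => _.
have y_cases e : [\/ e = a /\ y e = qext_u, e = b /\ y e = qext_v (q a b) | y e = 0].
  rewrite /y; case: eqP => [|_]; first by constructor 1.
  by case: eqP; [constructor 2 | constructor 3].
move=> i j; case: (y_cases i) => [[-> ->]|[-> ->]|->];
  case: (y_cases j) => [[-> ->]|[-> ->]|->];
  rewrite ?mul0r ?mulr0 ?scaler0 ?q_diag ?scale1r //.
- by rewrite qext_vu qext_uv.
- by rewrite qext_vu qext_uv scalerA mulrC q_inv scale1r.
Qed.

Definition diag_perm_map (lam : 'I_n -> k) (p : {perm 'I_n}) : A -> A :=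
  qlift (fun i => lam (p i) *: x (p i)).

Lemma diag_perm_mapP lam p : p \in Pq q ->
  alg_hom (diag_perm_map lam p) /\
  forall i, diag_perm_map lam p (x i) = lam (p i) *: x (p i).
Proof.
move=> /PqP qp; apply: qliftP => i j.
by rewrite !scalerMM qA.1 qp !scalerA; congr (_ *: _); ring.
Qed.

Lemma diag_perm_map_comp lam p mu r : p \in Pq q -> r \in Pq q ->
  diag_perm_map (fun i => lam i * perm_act p mu i) (r * p)
    =1 diag_perm_map lam p \o diag_perm_map mu r.
Proof.
move=> Pp Pr; have [hom_lp gen_lp] := diag_perm_mapP lam Pp.
have [hom_mr gen_mr] := diag_perm_mapP mu Pr.
have [hom gen] := diag_perm_mapP (fun i => lam i * perm_act p mu i) (groupM Pr Pp).
apply: alg_hom_gen_ext hom (alg_hom_comp hom_mr hom_lp) _ => i /=.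
by rewrite gen gen_mr (alg_homZ hom_lp) gen_lp scalerA /perm_act !permM permK mulrC.
Qed.

Lemma diag_perm_map1 lam : (forall i, lam i = 1) -> diag_perm_map lam 1 =1 id.
Proof.
move=> lam1; have [hom gen] := diag_perm_mapP lam (group1 (Pq_group q)).
by apply: alg_hom_gen_ext hom (alg_hom_id A) _ => i; rewrite gen perm1 lam1 scale1r.
Qed.

Lemma diag_perm_map_bij lam p : (forall i, lam i != 0) -> p \in Pq q ->
  bijective (diag_perm_map lam p).
Proof.
move=> lam_neq0 Pp; pose mu j := (lam (p j))^-1.
have Pp' : (p^-1)%g \in Pq q by rewrite groupV.
exists (diag_perm_map mu p^-1) => u.
- rewrite -[LHS](diag_perm_map_comp mu lam Pp' Pp u) mulgV diag_perm_map1 // => i.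
  by rewrite /perm_act invgK mulVf.
- rewrite -[LHS](diag_perm_map_comp lam mu Pp Pp' u) mulVg diag_perm_map1 // => i.
  by rewrite /perm_act /mu permKV mulfV.
Qed.

Lemma diag_perm_map_homog lam p d u : p \in Pq q ->
  homog x d u -> homog x d (diag_perm_map lam p u).
Proof.
move=> Pp [m [c [s [size_s ->]]]]; have [hom gen] := diag_perm_mapP lam Pp.
exists m, (fun j => c j * \prod_(i <- s j) lam (p i)), (fun j => map p (s j)).
split=> [j|]; first by rewrite size_map size_s.
rewrite (alg_hom_sum hom); apply: eq_bigr => j _.
rewrite (alg_homZ hom) (alg_hom_prod hom).
under eq_bigr do rewrite gen.
by rewrite scaler_prod scalerA big_map.
Qed.

Lemma diag_perm_map_graded lam p : (forall i, lam i != 0) -> p \in Pq q ->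
  graded_aut x (diag_perm_map lam p).
Proof.
move=> lam_neq0 Pp; split.
- exact: (diag_perm_mapP lam Pp).1.
- exact: diag_perm_map_bij.
- by move=> d u; apply: diag_perm_map_homog.
Qed.

Lemma xcoordZ_gen c a e : xcoord c (a *: x e) = if e == c then a else 0.
Proof.
have [hom gen] := xcoordP c; rewrite (alg_homZ hom) gen.
by case: eqP => _; [exact: mulr1 | exact: mulr0].
Qed.

Lemma diag_perm_map_inj lam p mu r : (forall i, lam i != 0) ->
  p \in Pq q -> r \in Pq q ->
  diag_perm_map lam p =1 diag_perm_map mu r -> lam =1 mu /\ p = r.
Proof.
move=> lam_neq0 Pp Pr eq_lm.
have [_ gen_l] := diag_perm_mapP lam Pp; have [_ gen_m] := diag_perm_mapP mu Pr.
have eq_i i : r i = p i /\ lam (p i) = mu (p i).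
  have := congr1 (xcoord (p i)) (eq_lm (x i)).
  rewrite gen_l gen_m !xcoordZ_gen eqxx.
  case: eqP => [-> //|_ lam0]; by case/eqP: (lam_neq0 (p i)).
have eq_pr : p = r by apply/permP => i; rewrite (eq_i i).1.
by split=> // b; rewrite -(permKV p b) (eq_i _).2.
Qed.

Section GradedAutomorphism.
Hypothesis q_rows_inj : injective (fun i => row i q).
Variable f : A -> A.
Hypothesis f_aut : graded_aut x f.

Definition coef_mx : 'M[k]_n := \matrix_(i, a) xcoord a (f (x i)).

Lemma f_gen i : f (x i) = \sum_a coef_mx i a *: x a.
Proof.
case: f_aut => _ _ f_homog; under [RHS]eq_bigr do rewrite mxE.
exact/homog1_lincomb/f_homog/homog_gen.
Qed.

Lemma f_rel i j : f (x j) * f (x i) = q i j *: (f (x i) * f (x j)).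
Proof. by case: f_aut => hom _ _; rewrite -!(alg_homM hom) qA.1 (alg_homZ hom). Qed.

Lemma coef_mx_rel_same i j a :
  coef_mx j a * coef_mx i a = q i j * (coef_mx i a * coef_mx j a).
Proof.
have [hom _] := xcoordP a; rewrite !mxE.
by have := congr1 (xcoord a) (f_rel i j); rewrite (alg_homZ hom) !(alg_homM hom).
Qed.

Lemma coef_mx_rel_pair i j a b : a != b ->
  coef_mx j a * coef_mx i b + q a b * (coef_mx j b * coef_mx i a)
    = q i j * (coef_mx i a * coef_mx j b + q a b * (coef_mx i b * coef_mx j a)).
Proof.
move=> neq_ab; have [hom gen] := qpairP neq_ab.
have pair_f l : qpair a b (f (x l))
    = coef_mx l a *: qext_u + coef_mx l b *: qext_v (q a b).
  rewrite f_gen (alg_hom_lincomb hom).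
  by under eq_bigr do rewrite gen; rewrite sum_scale_if2.
have := congr1 (fun M => qpair a b M (inord 3) (inord 0)) (f_rel i j).
rewrite /= (alg_homZ hom) !(alg_homM hom) !pair_f => E.
rewrite [RHS]mxE in E; rewrite -!qext_mul_coef; exact: E.
Qed.

Lemma coef_mx_unit : coef_mx \in unitmx.
Proof.
case: f_aut => hom /bij_inj f_inj _.
rewrite -row_free_unit -kermx_eq0; apply/rowV0P => w /sub_kermxP wC0.
have f_w : f (\sum_i w 0 i *: x i) = f 0.
  rewrite (alg_hom0 hom) (alg_hom_lincomb hom).
  under eq_bigr do rewrite f_gen scaler_sumr.
  rewrite exchange_big big1 //= => a _.
  under eq_bigr do rewrite scalerA.
  have := congr1 (fun M : 'rV_n => M 0 a) wC0; rewrite mxE [RHS]mxE => wCa.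
  by rewrite -scaler_suml wCa scale0r.
have w0 := gens_free (f_inj _ _ f_w).
by apply/rowP => i; rewrite w0 mxE.
Qed.

Lemma graded_aut_diag_perm :
  exists lam p, [/\ forall i, lam i != 0, p \in Pq q & f =1 diag_perm_map lam p].
Proof.
have [p [Pp Cp_neq0 C_eq0]] :=
  monomial_perm q_diag q_rows_inj coef_mx_unit coef_mx_rel_same coef_mx_rel_pair.
exists (fun b => coef_mx ((p^-1)%g b) b), p; split=> // [b|].
  by rewrite -{2}(permKV p b).
have [hom gen] := diag_perm_mapP (fun b => coef_mx ((p^-1)%g b) b) Pp.
case: f_aut => f_hom _ _; apply: alg_hom_gen_ext f_hom hom _ => i.
rewrite gen permK f_gen (bigD1 (p i)) //= big1 ?addr0 // => a neq_a.
by rewrite C_eq0 ?scale0r.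
Qed.

End GradedAutomorphism.

End QuantumAffineSpace.

Theorem corollary4p6 (k : fieldType) (n : nat) (q : 'M[k]_n)
    (A : algType k) (x : 'I_n -> A) :
  (0 < n)%N ->
  (forall i j, q i j * q j i = 1) -> (forall i, q i i = 1) ->
  is_quantum_affine_space q x ->
  injective (fun i : 'I_n => row i q) ->
  exists Phi : ('I_n -> k) -> {perm 'I_n} -> A -> A,
    [/\ forall lam p, (forall i, lam i != 0) -> p \in Pq q ->
          graded_aut x (Phi lam p),
        forall f, graded_aut x f ->
          exists lam p, [/\ forall i, lam i != 0, p \in Pq q & f =1 Phi lam p],
        forall lam p mu r, (forall i, lam i != 0) -> p \in Pq q ->
          (forall i, mu i != 0) -> r \in Pq q ->
          Phi lam p =1 Phi mu r -> lam =1 mu /\ p = r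
      & forall lam p mu r, (forall i, lam i != 0) -> p \in Pq q ->
          (forall i, mu i != 0) -> r \in Pq q ->
          Phi (fun i => lam i * perm_act p mu i) (r * p)%g
            =1 (Phi lam p \o Phi mu r)].
Proof.
move=> _ q_inv q_diag qA q_rows_inj; exists (diag_perm_map x); split.
- by move=> lam p lam_neq0 Pp; exact (diag_perm_map_graded qA lam_neq0 Pp).
- by move=> f f_aut; exact (graded_aut_diag_perm qA q_diag q_inv q_rows_inj f_aut).
- by move=> lam p mu r lam_neq0 Pp _ Pr; exact (diag_perm_map_inj qA q_diag lam_neq0 Pp Pr).
- by move=> lam p mu r _ Pp _ Pr; exact (diag_perm_map_comp qA lam mu Pp Pr).
Qed.
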